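(* Let $\Sigma$ and $\Delta$ be alphabets and $\varphi:\Delta\to 2^{\Sigma^*}$ a regular language substitution. (1) Let $\mathcal{R}_1=(K_1,\varphi)$ and $\mathcal{R}_2=(K_2,\varphi)$ be rational sets of regular languages with regular $K_1,K_2\subseteq\Delta^+$. Then $\mathcal{R}_1\cdot\mathcal{R}_2=\{L_1\cdot L_2\mid L_1\in\mathcal{R}_1,\ L_2\in\mathcal{R}_2\}$ is a rational set of regular languages of the form $(K',\varphi)$ for some regular $K'\subseteq\Delta^+$ (same substitution $\varphi$). If $\mathcal{R}_1$ and $\mathcal{R}_2$ are finite, then $\mathcal{R}_1\cdot\mathcal{R}_2$ is finite. (2) For every rational set of regular languages $\mathcal{R}$, the set $\mathcal{R}^\star=\bigcup_{i\in\mathbb{N}}\mathcal{R}^i$ is a rational set of regular languages. Moreover, $\mathcal{R}^\star$ is in general infinite even if $\mathcal{R}$ is finite: there exists a finite rational set of regular languages $\mathcal{R}$ for which $\mathcal{R}^\star$ is infinite.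
   Context: An alphabet is a nonempty finite set. A regular language substitution is a map $\varphi:\Delta\to 2^{\Sigma^*}$ such that each $\varphi(\delta)$ is a regular language over $\Sigma$. It is extended to words by $\varphi(\delta\cdot w)=\varphi(\delta)\cdot\varphi(w)$ and to languages $L$ by $\varphi(L)=\bigcup_{w\in L}\varphi(w)$. A set $\mathcal{R}$ of regular languages over $\Sigma$ is a rational set of regular languages (RSRL), written $\mathcal{R}=(K,\varphi)$, if there exist an alphabet $\Delta$, a regular language $K\subseteq\Delta^+$ and a regular language substitution $\varphi:\Delta\to2^{\Sigma^*}$ with $\mathcal{R}=\{\varphi(w)\mid w\in K\}$. Powers of sets of languages are defined by $\mathcal{R}^0=\{\{\varepsilon\}\}$ and $\mathcal{R}^{i+1}=\mathcal{R}^i\cdot\mathcal{R}$, with the product $\mathcal{R}_1\cdot\mathcal{R}_2=\{L_1L_2\mid L_1\in\mathcal{R}_1,L_2\in\mathcal{R}_2\}$. *)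

From mathcomp Require Import all_boot.
From Stdlib Require List.

Set Implicit Arguments.
Unset Strict Implicit.
Unset Printing Implicit Defensive.

Definition lang (S : finType) := seq S -> Prop.

Definition langset (S : finType) := lang S -> Prop.

Definition regular (S : finType) (L : lang S) : Prop :=
  exists (Q : finType) (q0 : Q) (F : pred Q) (trans : Q -> S -> Q),
    forall w : seq S, L w <-> F (foldl trans q0 w).

Definition eps_lang (S : finType) : lang S := fun w => w = [::].

Definition conc (S : finType) (L1 L2 : lang S) : lang S :=
  fun w => exists u v, w = u ++ v /\ L1 u /\ L2 v.

Definition regular_subst (D S : finType) (phi : D -> lang S) : Prop :=
  forall d, regular (phi d).

Fixpoint subst_word (D S : finType) (phi : D -> lang S) (w : seq D) : lang S :=
  match w with
  | [::] => @eps_lang S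
  | d :: w' => conc (phi d) (subst_word phi w')
  end.

Definition plus_lang (D : finType) (K : lang D) : Prop :=
  forall w, K w -> w <> [::].

Definition rsrl_of (D S : finType) (K : lang D) (phi : D -> lang S) : langset S :=
  fun L => exists w, K w /\ L = subst_word phi w.

Definition langset_eq (S : finType) (R1 R2 : langset S) : Prop :=
  forall L, R1 L <-> R2 L.

Definition is_RSRL (S : finType) (R : langset S) : Prop :=
  exists (D : finType) (K : lang D) (phi : D -> lang S),
    0 < #|D| /\ regular K /\ plus_lang K /\ regular_subst phi /\
    langset_eq R (rsrl_of K phi).

Definition lsprod (S : finType) (R1 R2 : langset S) : langset S :=
  fun L => exists L1 L2, R1 L1 /\ R2 L2 /\ L = conc L1 L2.

Fixpoint lspow (S : finType) (R : langset S) (i : nat) : langset S :=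
  match i with
  | 0 => fun L => L = @eps_lang S
  | i'.+1 => lsprod (lspow R i') R
  end.

Definition lsstar (S : finType) (R : langset S) : langset S :=
  fun L => exists i, lspow R i L.

Definition lsfinite (S : finType) (R : langset S) : Prop :=
  exists s : list (lang S), forall L, R L -> List.In L s.

From mathcomp Require Import all_boot.
From Stdlib Require FunctionalExtensionality PropExtensionality Classical_Prop.
From Stdlib Require List.

Set Implicit Arguments.
Unset Strict Implicit.
Unset Printing Implicit Defensive.

(* The extension of phi to words is a monoid morphism into languages under
   concatenation, so {phi(u) | u in K1} . {phi(v) | v in K2} is the image of
   K1 K2, and R^i = (K, phi)^i is the image of K^i.  Hence R^* is the image,
   under phi extended by a fresh letter None |-> {eps}, of the regular code
   language {[None]} + Some(K^+); regularity of K1 K2 and K^+ comes from the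
   usual automaton constructions.  For the infinite example take R = {{a}}:
   its powers {a^i} are pairwise distinct. *)

Lemma lang_ext (S : finType) (L1 L2 : lang S) :
  (forall w, L1 w <-> L2 w) -> L1 = L2.
Proof.
move=> eqL; apply: FunctionalExtensionality.functional_extensionality => w.
exact: PropExtensionality.propositional_extensionality.
Qed.

Lemma langset_ext (S : finType) (R1 R2 : langset S) :
  langset_eq R1 R2 -> R1 = R2.
Proof.
move=> eqR; apply: FunctionalExtensionality.functional_extensionality => L.
exact: PropExtensionality.propositional_extensionality.
Qed.

Lemma concA (S : finType) (A B C : lang S) :
  conc (conc A B) C = conc A (conc B C).
Proof.
apply: lang_ext => w; split.
- move=> [x [z [-> [[u [v [-> [Au Bv]]]] Cz]]]].
  by exists u, (v ++ z); rewrite catA; split=> //; split=> //; exists v, z.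
- move=> [u [y [-> [Au [v [z [-> [Bv Cz]]]]]]]].
  by exists (u ++ v), z; rewrite catA; split=> //; split=> //; exists u, v.
Qed.

Lemma conc_epsl (S : finType) (A : lang S) : conc (@eps_lang S) A = A.
Proof.
apply: lang_ext => w; split; last by move=> Aw; exists [::], w.
by move=> [u [v [-> [-> Av]]]].
Qed.

Lemma subst_word_cat (D S : finType) (phi : D -> lang S) (u v : seq D) :
  subst_word phi (u ++ v) = conc (subst_word phi u) (subst_word phi v).
Proof. by elim: u => [|d u IHu] /=; rewrite ?conc_epsl // IHu concA. Qed.

Lemma rcons_eq_cat (T : eqType) (w u v : seq T) (c : T) :
  rcons w c = u ++ v <->
  (v = [::] /\ u = rcons w c) \/ (exists v', v = rcons v' c /\ w = u ++ v').
Proof.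
split.
- case/lastP: v => [|v' b]; first by rewrite cats0 => ->; left.
  rewrite -rcons_cat => /eqP; rewrite eqseq_rcons => /andP [/eqP -> /eqP ->].
  by right; exists v'.
- by case=> [[-> ->]|[v' [-> ->]]]; rewrite ?cats0 ?rcons_cat.
Qed.

(** * Closure properties of regular languages *)

Definition letter_trans (S : finType) (a : S) (q : option bool) (c : S) :=
  if (q == Some false) && (c == a) then Some true else None.

Lemma regular_letter (S : finType) (a : S) : regular (fun w : seq S => w = [:: a]).
Proof.
have dead w : foldl (letter_trans a) None w = None by elim: w.
exists (option bool), (Some false), (pred1 (Some true)), (letter_trans a).
case=> [|c w] /=; first by [].
rewrite {2}/letter_trans /=; case: (c =P a) => [->|neq_ca] /=.
- by case: w => [|c' w] //=; rewrite dead.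
- by rewrite dead; split=> // [[]].
Qed.

Lemma regular_eps (S : finType) : regular (@eps_lang S).
Proof.
exists bool, true, idfun, (fun _ _ => false).
case=> [|c w] //=; by have -> : foldl (fun _ _ => false) false w = false by elim: w.
Qed.

Lemma regularU (S : finType) (L1 L2 : lang S) :
  regular L1 -> regular L2 -> regular (fun w => L1 w \/ L2 w).
Proof.
move=> [Q1 [q1 [F1 [t1 L1E]]]] [Q2 [q2 [F2 [t2 L2E]]]].
pose t q c := (t1 q.1 c, t2 q.2 c).
exists (Q1 * Q2)%type, (q1, q2), (fun q => F1 q.1 || F2 q.2), t.
have foldl_t w p : foldl t p w = (foldl t1 p.1 w, foldl t2 p.2 w).
  by elim: w p => [|c w IHw] [p1 p2] //=; rewrite IHw.
move=> w; rewrite foldl_t /=; split.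
- by case=> [/L1E -> | /L2E ->] //; rewrite orbT.
- by case/orP=> [/L1E|/L2E]; [left|right].
Qed.

Definition opt_trans (S Q : finType) (t : Q -> S -> Q) (q : option Q) (c : option S) :=
  if (q, c) is (Some q, Some c) then Some (t q c) else None.

Lemma regular_map_Some (S : finType) (L : lang S) : regular L ->
  regular (fun w : seq (option S) => exists u, w = map Some u /\ L u).
Proof.
move=> [Q [q0 [F [t LE]]]].
pose F' (q : option Q) := if q is Some q then F q else false.
exists (option Q), (Some q0), F', (opt_trans t).
have dead w : foldl (opt_trans t) None w = None by elim: w.
have run w q : F' (foldl (opt_trans t) (Some q) w) <->
               exists u, w = map Some u /\ F (foldl t q u).
  elim: w q => [|[d|] w IHw] q /=.
  - by split=> [Fq|[[|x u] [//= _ ->]]]; first exists [::].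
  - rewrite IHw; split; first by case=> u [-> Fu]; exists (d :: u).
    by case=> [[|x u] [//= [-> ->] Fu]]; exists u.
  - by rewrite dead; split=> // [[[|x u] []]].
move=> w; rewrite run.
by split; case=> u [-> /LE Fu]; exists u.
Qed.

Section ConcAutomaton.
Variables (S Q1 Q2 : finType) (q1 : Q1) (F1 : pred Q1) (t1 : Q1 -> S -> Q1)
  (q2 : Q2) (t2 : Q2 -> S -> Q2).

(* Run the first automaton and, in parallel, the set of runs of the second
   one started at every position where the first one accepts. *)
Definition conc_start (q : Q1) : {set Q2} := if F1 q then [set q2] else set0.

Definition conc_trans (p : Q1 * {set Q2}) (c : S) : Q1 * {set Q2} :=
  (t1 p.1 c, [set t2 s c | s in p.2] :|: conc_start (t1 p.1 c)).

Lemma conc_trans_run w :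
  (foldl conc_trans (q1, conc_start q1) w).1 = foldl t1 q1 w /\
  forall s, s \in (foldl conc_trans (q1, conc_start q1) w).2 <->
    exists u v, w = u ++ v /\ F1 (foldl t1 q1 u) /\ s = foldl t2 q2 v.
Proof.
elim/last_ind: w => [|w c [run1 run2]].
- split=> // s /=; rewrite /conc_start; split.
  + by case: ifP => F1q1; rewrite ?in_set0 // in_set1 => /eqP ->; exists [::], [::].
  + by move=> [[|x u] [[|y v] [//= _ [-> ->]]]]; rewrite in_set1.
rewrite !foldl_rcons /= run1; split=> // s; rewrite in_setU; split.
- case/orP.
  + case/imsetP=> s' /run2 [u [v' [-> [F1u ->]]]] ->.
    by exists u, (rcons v' c); rewrite rcons_cat foldl_rcons.
  + rewrite /conc_start; case: ifP => F1w; rewrite ?in_set0 // in_set1 => /eqP ->.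
    by exists (rcons w c), [::]; rewrite cats0 foldl_rcons.
- case=> u [v [/rcons_eq_cat [[-> ->]|[v' [-> Ew]]] [F1u ->]]].
  + by rewrite foldl_rcons in F1u; rewrite /conc_start F1u in_set1 eqxx orbT.
  + by rewrite foldl_rcons imset_f //; apply/run2; exists u, v'.
Qed.

End ConcAutomaton.

Lemma regular_conc (S : finType) (L1 L2 : lang S) :
  regular L1 -> regular L2 -> regular (conc L1 L2).
Proof.
move=> [Q1 [q1 [F1 [t1 L1E]]]] [Q2 [q2 [F2 [t2 L2E]]]].
exists (Q1 * {set Q2})%type, (q1, conc_start F1 q2 q1),
  (fun p : Q1 * {set Q2} => [exists s in p.2, F2 s]), (conc_trans F1 t1 q2 t2) => w.
have run2 := fun w => proj2 (conc_trans_run q1 F1 t1 q2 t2 w).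
split.
- case=> u [v [-> [/L1E F1u /L2E F2v]]].
  by apply/existsP; exists (foldl t2 q2 v); rewrite F2v andbT; apply/run2; exists u, v.
- case/existsP=> s /andP [/run2 [u [v [-> [F1u ->]]]] F2v].
  by exists u, v; split=> //; split; [apply/L1E|apply/L2E].
Qed.

(* The star of L with nonempty factors, i.e. the star of L \ {eps}. *)
Inductive lstar (D : finType) (L : lang D) : seq D -> Prop :=
| lstar_nil : lstar L [::]
| lstar_snoc x u : lstar L x -> L u -> u <> [::] -> lstar L (x ++ u).

Section StarAutomaton.
Variables (S Q : finType) (q0 : Q) (F : pred Q) (t : Q -> S -> Q) (L : lang S).
Hypothesis LE : forall w, L w <-> F (foldl t q0 w).

(* Subset construction that restarts at q0 after every nonempty accepted factor. *)
Definition star_trans (X : {set Q}) (c : S) : {set Q} :=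
  [set t s c | s in X] :|:
    (if [exists s in [set t s c | s in X], F s] then [set q0] else set0).

Lemma star_trans_run w : forall s, s \in foldl star_trans [set q0] w <->
  exists x v, w = x ++ v /\ lstar L x /\ s = foldl t q0 v.
Proof.
elim/last_ind: w => [|w c IHw] s.
  split; first by rewrite in_set1 => /eqP ->; exists [::], [::]; do 2?split=> //; exact: lstar_nil.
  by move=> [[|x u] [[|y v] [//= _ [_ ->]]]]; rewrite in_set1.
have restart : [exists s in [set t s c | s in foldl star_trans [set q0] w], F s]
               <-> lstar L (rcons w c).
  split.
  - case/existsP=> s' /andP [/imsetP [s'' /IHw [x [v' [-> [Lx ->]]]] ->] Fs'].
    rewrite -cats1 -catA cats1; apply: lstar_snoc => //.
    + by apply/LE; rewrite foldl_rcons.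
    + by move/(congr1 size); rewrite size_rcons.
  - move Ewc: (rcons w c) => wc Lwc.
    case: wc / Lwc Ewc => [|x u Lx Lu nz_u]; first by case: (w).
    move/rcons_eq_cat => [[/nz_u //]|[v' [Eu Ew]]]; rewrite {}Eu in Lu.
    apply/existsP; exists (t (foldl t q0 v') c); rewrite imset_f /=.
      by move/LE: Lu; rewrite foldl_rcons.
    by apply/IHw; exists x, v'.
rewrite foldl_rcons /star_trans in_setU; split.
- case/orP.
  + case/imsetP=> s' /IHw [x [v' [-> [Lx ->]]]] ->.
    by exists x, (rcons v' c); rewrite rcons_cat foldl_rcons.
  + case: ifP => [/restart Lw|_]; rewrite ?in_set0 // in_set1 => /eqP ->.
    by exists (rcons w c), [::]; rewrite cats0.
- case=> x [v [/rcons_eq_cat [[-> ->]|[v' [-> Ew]]] [Lx ->]]].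
  + by move/restart: Lx => ->; rewrite in_set1 eqxx orbT.
  + by rewrite foldl_rcons imset_f //; apply/IHw; exists x, v'.
Qed.

End StarAutomaton.

Lemma regular_plus (S : finType) (L : lang S) : regular L -> regular (conc (lstar L) L).
Proof.
move=> [Q [q0 [F [t LE]]]].
exists {set Q}, [set q0], (fun X : {set Q} => [exists s in X, F s]), (star_trans q0 F t) => w.
have run := star_trans_run LE; split.
- case=> x [v [-> [Lx /LE Fv]]].
  by apply/existsP; exists (foldl t q0 v); rewrite Fv andbT; apply/run; exists x, v.
- case/existsP=> s /andP [/run [x [v [-> [Lx ->]]]] Fv].
  by exists x, v; split=> //; split=> //; apply/LE.
Qed.

(** * Powers and star of a language of codes *)

Fixpoint lpow (D : finType) (K : lang D) (i : nat) : lang D :=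
  if i is i'.+1 then conc (lpow K i') K else @eps_lang D.

Lemma lstar_lpow (D : finType) (K : lang D) : plus_lang K ->
  forall x, lstar K x <-> exists i, lpow K i x.
Proof.
move=> K_ne x; split.
- by elim=> [|y u _ [i Ki] Ku _]; [exists 0 | exists i.+1, y, u].
- case=> i; elim: i x => [|i IHi] x /=; first by move=> ->; exact: lstar_nil.
  by case=> y [u [-> [Ky Ku]]]; apply: lstar_snoc (IHi _ Ky) Ku (K_ne _ Ku).
Qed.

Lemma conc_lstar_lpow (D : finType) (K : lang D) : plus_lang K ->
  forall w, conc (lstar K) K w <-> exists i, lpow K i.+1 w.
Proof.
move=> K_ne w; split.
- by case=> x [v [-> [/(lstar_lpow K_ne) [i Ki] Kv]]]; exists i, x, v.
- case=> i [y [u [-> [Ky Ku]]]]; exists y, u; do 2!split=> //.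
  by apply/(lstar_lpow K_ne); exists i.
Qed.

Lemma plus_lang_concl (D : finType) (K1 K2 : lang D) :
  plus_lang K1 -> plus_lang (conc K1 K2).
Proof. by move=> K1_ne w [[|d u] [v [-> [/K1_ne K1u _]]]]. Qed.

Lemma plus_lang_concr (D : finType) (K1 K2 : lang D) :
  plus_lang K2 -> plus_lang (conc K1 K2).
Proof.
move=> K2_ne w [u [v [-> [_ /K2_ne v_ne]]]].
by case: u v v_ne => [|c u] [|d v].
Qed.

(** * Rational sets of regular languages *)

Lemma lsprod_rsrl (D S : finType) (phi : D -> lang S) (K1 K2 : lang D) :
  lsprod (rsrl_of K1 phi) (rsrl_of K2 phi) = rsrl_of (conc K1 K2) phi.
Proof.
apply: langset_ext => L; split.
- case=> L1 [L2 [[u [K1u ->]] [[v [K2v ->]] ->]]].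
  by exists (u ++ v); rewrite subst_word_cat; split=> //; exists u, v.
- case=> w [[u [v [-> [K1u K2v]]]] ->].
  exists (subst_word phi u), (subst_word phi v); rewrite subst_word_cat.
  by split; [exists u | split=> //; exists v].
Qed.

Lemma lspow_rsrl (D S : finType) (phi : D -> lang S) (K : lang D) (i : nat) :
  lspow (rsrl_of K phi) i = rsrl_of (lpow K i) phi.
Proof.
elim: i => [|i /= ->]; last exact: lsprod_rsrl.
by apply: langset_ext => L; split=> [->|[w [-> ->]]]; first exists [::].
Qed.

Lemma lsfinite_lsprod (S : finType) (R1 R2 : langset S) :
  lsfinite R1 -> lsfinite R2 -> lsfinite (lsprod R1 R2).
Proof.
move=> [s1 R1s1] [s2 R2s2].
exists (List.flat_map (fun L1 => List.map (conc L1) s2) s1).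
move=> L [L1 [L2 [/R1s1 L1s1 [/R2s2 L2s2 ->]]]].
by apply/List.in_flat_map; exists L1; split=> //; apply: List.in_map.
Qed.

Lemma not_lsfinite_inj (S : finType) (R : langset S) (f : nat -> lang S) :
  injective f -> (forall i, R (f i)) -> ~ lsfinite R.
Proof.
move=> f_inj Rf [s Rs].
suff /(_ 0) [i _ fi_s] : forall N, exists2 i, N <= i & ~ List.In (f i) s.
  exact: fi_s (Rs _ (Rf i)).
elim: s {Rs} => [|L s IHs] N; first by exists N.
have [i leNi fi_s] := IHs N; have [j ltij fj_s] := IHs i.+1.
case: (Classical_Prop.classic (f i = L)) => [fiL|fiL]; last by exists i => // -[/esym|].
exists j => [|[fjL|//]]; first exact: leq_trans leNi (ltnW ltij).
by move: ltij; rewrite (f_inj i j (etrans fiL fjL)) ltnn.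
Qed.

(* The code [None] stands for the factor R^0 = {{eps}}; the words of
   map Some (K^+) code the powers R^i with i > 0. *)
Definition star_code (D : finType) (K : lang D) : lang (option D) :=
  fun w => w = [:: None] \/ exists u, w = map Some u /\ conc (lstar K) K u.

Definition opt_subst (D S : finType) (phi : D -> lang S) (o : option D) : lang S :=
  if o is Some d then phi d else @eps_lang S.

Lemma subst_word_map_Some (D S : finType) (phi : D -> lang S) (w : seq D) :
  subst_word (opt_subst phi) (map Some w) = subst_word phi w.
Proof. by elim: w => //= d w ->. Qed.

Lemma regular_star_code (D : finType) (K : lang D) :
  regular K -> regular (star_code K).
Proof.
move=> regK; apply: regularU; first exact: regular_letter.
exact/regular_map_Some/regular_plus.
Qed.

Lemma plus_lang_star_code (D : finType) (K : lang D) :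
  plus_lang K -> plus_lang (star_code K).
Proof.
move=> /(plus_lang_concr (K1 := lstar K)) Kplus_ne w [-> //|[u [-> /Kplus_ne]]].
by case: u.
Qed.

Lemma regular_subst_opt (D S : finType) (phi : D -> lang S) :
  regular_subst phi -> regular_subst (opt_subst phi).
Proof. by move=> reg_phi [d|]; [exact: reg_phi | exact: regular_eps]. Qed.

Lemma lsstar_rsrl (D S : finType) (phi : D -> lang S) (K : lang D) :
  plus_lang K ->
  langset_eq (lsstar (rsrl_of K phi)) (rsrl_of (star_code K) (opt_subst phi)).
Proof.
move=> K_ne L; split.
- case=> -[|i]; rewrite lspow_rsrl => -[w [Kiw ->]].
    by exists [:: None]; split; [left | rewrite Kiw /= conc_epsl].
  exists (map Some w); rewrite subst_word_map_Some; split=> //.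
  by right; exists w; split=> //; apply/(conc_lstar_lpow K_ne); exists i.
- case=> w' [[->|[u [-> /(conc_lstar_lpow K_ne) [i Kiu]]]] ->].
    by exists 0; rewrite /= conc_epsl.
  by exists i.+1; rewrite lspow_rsrl subst_word_map_Some; exists u.
Qed.

Lemma is_RSRL_lsstar (S : finType) (R : langset S) : is_RSRL R -> is_RSRL (lsstar R).
Proof.
move=> [D [K [phi [D_gt0 [regK [K_ne [reg_phi /langset_ext ->]]]]]]].
exists (option D), (star_code K), (opt_subst phi).
split; first by rewrite card_option.
split; first exact: regular_star_code.
split; first exact: plus_lang_star_code.
split; first exact: regular_subst_opt.
exact: lsstar_rsrl.
Qed.

Lemma subst_word_letters (D S : finType) (a : D -> S) (u : seq D) :
  subst_word (fun d w => w = [:: a d]) u = (fun w => w = map a u).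
Proof.
elim: u => [|d u IHu] /=; apply: lang_ext => w; first by [].
rewrite IHu; split; first by case=> x [y [-> [-> ->]]].
by move=> ->; exists [:: a d], (map a u).
Qed.

Lemma lpow_letter (S : finType) (a : S) (i : nat) :
  lpow (fun w => w = [:: a]) i (nseq i a).
Proof.
elim: i => [|i IHi] //.
by exists (nseq i a), [:: a]; rewrite -[i.+1]addn1 nseqD.
Qed.

Lemma lsstar_letter_infinite :
  let R := rsrl_of (fun w => w = [:: tt]) (fun d w => w = [:: d]) in
  is_RSRL R /\ lsfinite R /\ ~ lsfinite (lsstar R).
Proof.
have subst_id (u : seq unit) : subst_word (fun d w => w = [:: d]) u = eq^~ u.
  by have := subst_word_letters id u; rewrite map_id.
split.
  exists unit, (fun w => w = [:: tt]), (fun d w => w = [:: d]).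
  split; first by rewrite card_unit.
  split; first exact: regular_letter.
  split; first by move=> w ->.
  by split=> // d; exact: regular_letter.
split; first by exists [:: subst_word (fun d w => w = [:: d]) [:: tt]] => L [w [-> ->]]; left.
apply: (@not_lsfinite_inj _ _ (fun i => subst_word (fun d w => w = [:: d]) (nseq i tt))).
- move=> i j; rewrite !subst_id => /(congr1 (fun L => L (nseq i tt))) /= E.
  have := erefl (nseq i tt); rewrite E => /(congr1 size).
  by rewrite !size_nseq.
- by move=> i; exists i; rewrite lspow_rsrl; exists (nseq i tt); split=> //; apply: lpow_letter.
Qed.

Theorem proposition1 :
  (forall (S D : finType) (phi : D -> lang S) (K1 K2 : lang D),
      0 < #|S| -> 0 < #|D| -> regular_subst phi ->
      regular K1 -> plus_lang K1 -> regular K2 -> plus_lang K2 ->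
      (exists K' : lang D, regular K' /\ plus_lang K' /\
         langset_eq (lsprod (rsrl_of K1 phi) (rsrl_of K2 phi)) (rsrl_of K' phi)) /\
      (lsfinite (rsrl_of K1 phi) -> lsfinite (rsrl_of K2 phi) ->
         lsfinite (lsprod (rsrl_of K1 phi) (rsrl_of K2 phi)))) /\
  (forall (S : finType) (R : langset S),
      0 < #|S| -> is_RSRL R -> is_RSRL (lsstar R)) /\
  (exists (S : finType) (R : langset S),
      0 < #|S| /\ is_RSRL R /\ lsfinite R /\ ~ lsfinite (lsstar R)).
Proof.
split; [|split].
- move=> S D phi K1 K2 _ _ _ regK1 K1_ne regK2 _; split; last exact: lsfinite_lsprod.
  exists (conc K1 K2); rewrite lsprod_rsrl.
  by split; [exact: regular_conc | split; [exact: plus_lang_concl | move]].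
- by move=> S R _; exact: is_RSRL_lsstar.
- by exists unit; eexists; split; [rewrite card_unit | exact: lsstar_letter_infinite].
Qed.
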